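(* For all real $a$ and $y$, $$\int_0^{\infty}e^{-t}\,\operatorname{ber}\!\left(a\sqrt{(1+y^2)t}\right)J_0(yt)\,dt=(1+y^2)^{-1/2}I_0\!\left(\frac{a^2y}{4}\right)\cos\!\left(\frac{a^2}{4}\right).$$
   Context: $J_0$, $I_0$ are the Bessel and modified Bessel functions of order $0$. The Kelvin function $\operatorname{ber}$ is $\operatorname{ber}(x)=\sum_{k\ge0}\frac{(-1)^k (x/2)^{4k}}{((2k)!)^2}$. *)

From Stdlib Require Import Reals Factorial.
From Coquelicot Require Import Coquelicot.
Open Scope R_scope.

Definition J0 (x : R) : R :=
  Series (fun k => (-1) ^ k * (x / 2) ^ (2 * k) / (INR (fact k)) ^ 2).

Definition I0 (x : R) : R :=
  Series (fun k => (x / 2) ^ (2 * k) / (INR (fact k)) ^ 2).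

Definition ber (x : R) : R :=
  Series (fun k => (-1) ^ k * (x / 2) ^ (4 * k) / (INR (fact (2 * k))) ^ 2).

(* With kappa = a^2 (1 + y^2) / 4, ber (a sqrt ((1 + y^2) t)) is the power series
   sum_k (-1)^k (kappa t)^(2k) / ((2k)!)^2, and the integral is computed termwise.
   By Bessel's equation and an integration by parts, the moments
   M_n = int_0^oo exp (- t) t^n J0 (y t) dt obey
   (1 + y^2) M_(n+1) = (2n + 1) M_n - n^2 M_(n-1), and M_0 = (1 + y^2)^(-1/2)
   (differentiate sqrt (1 + y^2) M_0 in y).  Solving the recurrence explicitly,
   (-1)^k kappa^(2k) M_(2k) / ((2k)!)^2 turns out to be (1 + y^2)^(-1/2) times the
   k-th Cauchy-product coefficient of the series of I0 (a^2 y / 4) and cos (a^2 / 4).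
   Termwise integration is justified since |J0| <= 1 (an energy argument) and the tail
   of the ber series is at most exp (t / 2) times a tail of the series of cosh (2 kappa). *)

From Stdlib Require Import Reals Lra Lia Psatz Factorial Arith.
From Coquelicot Require Import Coquelicot.
Open Scope R_scope.

(** * Power series, limits at infinity and improper integrals *)

Lemma INR_fact_ge_1 k : 1 <= INR (fact k).
Proof. apply (le_INR 1), lt_O_fact. Qed.

Lemma pow_div_fact_le_exp x n : 0 <= x -> x ^ n / INR (fact n) <= exp x.
Proof.
  intros Hx. apply Rle_trans with (sum_f_R0 (fun k => x ^ k / INR (fact k)) n);
    [| now apply exp_ge_taylor].
  destruct n as [|n]; [simpl; lra|].
  rewrite tech5.
  assert (0 <= sum_f_R0 (fun k => x ^ k / INR (fact k)) n); [|lra].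
  apply cond_pos_sum; intros k.
  apply Rle_mult_inv_pos; [now apply pow_le | apply INR_fact_lt_0].
Qed.

Lemma CV_radius_le_inv_fact (a : nat -> R) :
  (forall n, Rabs (a n) <= / INR (fact n)) -> CV_radius a = p_infty.
Proof.
  intros Ha.
  assert (Hr : forall r, 0 <= r -> Rbar_le r (CV_radius a)).
  { intros r Hr. apply (proj1 (CV_radius_bounded a)).
    exists (exp r); intros n.
    rewrite Rabs_mult, <- RPow_abs, (Rabs_pos_eq r Hr), Rmult_comm.
    apply Rle_trans with (r ^ n / INR (fact n)); [|now apply pow_div_fact_le_exp].
    apply Rmult_le_compat_l; [now apply pow_le | apply Ha]. }
  destruct (CV_radius a) as [r| |] eqn:E; auto.
  - specialize (Hr (Rabs r + 1)). simpl in Hr. pose proof (Rle_abs r).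
    pose proof (Rabs_pos r). lra.
  - now specialize (Hr 0 (Rle_refl 0)).
Qed.

Lemma Rabs_lt_CV_radius_le_inv_fact (a : nat -> R) x :
  (forall n, Rabs (a n) <= / INR (fact n)) -> Rbar_lt (Rabs x) (CV_radius a).
Proof. intros Ha. now rewrite (CV_radius_le_inv_fact a Ha). Qed.

Lemma is_derive_PSeries_entire (a : nat -> R) z :
  CV_radius a = p_infty -> is_derive (PSeries a) z (PSeries (PS_derive a) z).
Proof. intros Ha. apply is_derive_PSeries. now rewrite Ha. Qed.

Lemma ex_derive_continuity_pt (f : R -> R) x : ex_derive f x -> continuity_pt f x.
Proof.
  intros H. apply continuity_pt_filterlim.
  exact (ex_derive_continuous (K := R_AbsRing) (V := R_NormedModule) f x H).
Qed.

Ltac continuous_by_derive :=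
  apply (ex_derive_continuous (K := R_AbsRing) (V := R_NormedModule));
  auto_derive; repeat split; auto.

Lemma is_lim_abs_sub_le (f g : R -> R) (l : R) :
  (forall B, 0 <= B -> Rabs (f B - l) <= g B) -> is_lim g p_infty 0 ->
  is_lim f p_infty l.
Proof.
  intros Hfg Hg.
  apply (is_lim_le_le_loc (fun B => l - g B) (fun B => l + g B)).
  - exists 0. intros B HB. specialize (Hfg B (Rlt_le _ _ HB)).
    apply Rabs_le_between in Hfg. lra.
  - replace (Finite l) with (Finite (l - 0)) by (f_equal; ring).
    apply is_lim_minus'; [apply is_lim_const | exact Hg].
  - replace (Finite l) with (Finite (l + 0)) by (f_equal; ring).
    apply is_lim_plus'; [apply is_lim_const | exact Hg].
Qed.

Lemma is_lim_exp_opp_mul_pow k : is_lim (fun B => exp (- B) * B ^ k) p_infty 0.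
Proof.
  pose proof (INR_fact_lt_0 (S k)) as Hc.
  set (c := INR (fact (S k))) in *.
  apply (is_lim_le_le_loc (fun _ => 0) (fun B => c * / B)).
  - exists 0. intros B HB. split.
    + apply Rmult_le_pos; [apply Rlt_le, exp_pos | apply pow_le; lra].
    + pose proof (pow_div_fact_le_exp B (S k) (Rlt_le _ _ HB)) as H.
      pose proof (exp_pos B). fold c in H.
      rewrite exp_Ropp. simpl pow in H.
      apply (Rmult_le_reg_l (exp B * B / c)); [apply Rdiv_lt_0_compat; nra|].
      replace (exp B * B / c * (/ exp B * B ^ k)) with (B * B ^ k / c)
        by (field; repeat split; lra).
      replace (exp B * B / c * (c * / B)) with (exp B) by (field; repeat split; lra).
      exact H.
  - apply is_lim_const.
  - replace (Finite 0) with (Rbar_mult c (Rbar_inv p_infty)) by (simpl; f_equal; ring).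
    apply is_lim_scal_l, is_lim_inv; [apply is_lim_id | discriminate].
Qed.

Lemma sum_f_R0_eq_of_vanish (f : nat -> R) N M :
  (N <= M)%nat -> (forall j, (N < j)%nat -> f j = 0) -> sum_f_R0 f M = sum_f_R0 f N.
Proof.
  intros HM Hf. induction HM as [|M HM IH]; [reflexivity|].
  rewrite tech5, IH, Hf by lia. ring.
Qed.

Lemma sum_f_R0_mult_l (f : nat -> R) c N : sum_f_R0 (fun j => c * f j) N = c * sum_f_R0 f N.
Proof. induction N as [|N IH]; simpl; [|rewrite IH]; ring. Qed.

Lemma is_lim_seq_Series_tail (a : nat -> R) :
  ex_series a -> is_lim_seq (fun K => Series (fun k => a (S K + k)%nat)) 0.
Proof.
  intros Ha.
  apply (is_lim_seq_ext (fun K => Series a - sum_n a K)).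
  { intros K. rewrite sum_n_Reals, (Series_incr_n a (S K)) by (auto || lia). simpl. ring. }
  replace (Finite 0) with (Finite (Series a - Series a)) by (f_equal; ring).
  apply is_lim_seq_minus'; [apply is_lim_seq_const | apply Series_correct, Ha].
Qed.

Lemma is_lim_sum_f_R0 (g : nat -> R -> R) (l : nat -> R) (x : Rbar) K :
  (forall k, is_lim (g k) x (l k)) ->
  is_lim (fun B => sum_f_R0 (fun k => g k B) K) x (sum_f_R0 l K).
Proof.
  intros Hg. induction K as [|K IH]; [apply Hg|].
  apply is_lim_plus'; [exact IH | apply Hg].
Qed.

Lemma is_lim_uniform_approx (f : R -> R) (g : nat -> R -> R) (lg d : nat -> R) (L : R) :
  (forall K B, 0 <= B -> Rabs (f B - g K B) <= d K) ->
  (forall K, is_lim (g K) p_infty (lg K)) -> is_lim_seq lg L -> is_lim_seq d 0 ->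
  is_lim f p_infty L.
Proof.
  intros Hfg Hg Hlg Hd. apply is_lim_spec. intros eps.
  assert (He3 : 0 < eps / 3) by (pose proof (cond_pos eps); lra).
  destruct (proj2 (is_lim_seq_spec lg L) Hlg (mkposreal _ He3)) as [N1 HN1].
  destruct (proj2 (is_lim_seq_spec d 0) Hd (mkposreal _ He3)) as [N2 HN2].
  set (K := max N1 N2).
  destruct (proj2 (is_lim_spec (g K) p_infty (lg K)) (Hg K) (mkposreal _ He3)) as [M HM].
  exists (Rmax M 0). intros B HB.
  pose proof (Rmax_l M 0). pose proof (Rmax_r M 0).
  specialize (HN1 K (Nat.le_max_l _ _)). specialize (HN2 K (Nat.le_max_r _ _)).
  specialize (HM B ltac:(lra)). specialize (Hfg K B ltac:(lra)). simpl in *.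
  rewrite Rminus_0_r in HN2. pose proof (Rle_abs (d K)).
  replace (f B - L) with ((f B - g K B) + (g K B - lg K) + (lg K - L)) by ring.
  eapply Rle_lt_trans; [apply Rabs_triang|].
  eapply Rle_lt_trans; [apply Rplus_le_compat_r, Rabs_triang|].
  lra.
Qed.

Lemma is_RInt_gen_of_is_lim (f : R -> R) (l : R) :
  (forall B, 0 <= B -> ex_RInt f 0 B) -> is_lim (fun B => RInt f 0 B) p_infty l ->
  is_RInt_gen f (at_point 0) (Rbar_locally p_infty) l.
Proof.
  intros Hex Hl P [eps HP].
  destruct (proj2 (is_lim_spec _ p_infty l) Hl eps) as [M HM].
  apply (Filter_prod _ _ _ (fun x => x = 0) (fun B => Rmax M 0 < B));
    [reflexivity | now exists (Rmax M 0) |].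
  intros x B -> HB. pose proof (Rmax_l M 0). pose proof (Rmax_r M 0).
  exists (RInt f 0 B). split.
  - apply (RInt_correct (V := R_CompleteNormedModule)), Hex. lra.
  - apply HP, HM. lra.
Qed.

(** * Bessel's equation and the bound |J0| <= 1 *)

Definition J0_coef (k : nat) : R := (-1) ^ k / INR (fact k) ^ 2.

Lemma J0_coef_le_inv_fact k : Rabs (J0_coef k) <= / INR (fact k).
Proof.
  unfold J0_coef, Rdiv. rewrite Rabs_mult, pow_1_abs, Rmult_1_l.
  pose proof (INR_fact_ge_1 k).
  rewrite Rabs_pos_eq by (apply Rlt_le, Rinv_0_lt_compat, pow_lt; lra).
  apply Rinv_le_contravar; [lra | simpl; nra].
Qed.

Lemma J0_coef_S n : J0_coef (S n) = - J0_coef n / INR (S n) ^ 2.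
Proof.
  unfold J0_coef. rewrite fact_simpl, mult_INR.
  pose proof (INR_fact_lt_0 n). pose proof (lt_0_INR (S n) (Nat.lt_0_succ n)).
  set (s := INR (S n)) in *. set (f := INR (fact n)) in *. simpl pow. field. lra.
Qed.

Lemma J0_PSeries x : J0 x = PSeries J0_coef (x ^ 2 / 4).
Proof.
  unfold J0, PSeries. apply Series_ext; intros k.
  rewrite pow_mult. replace ((x / 2) ^ 2) with (x ^ 2 / 4) by field.
  unfold J0_coef. pose proof (INR_fact_lt_0 k). field. lra.
Qed.

Lemma CV_radius_J0_coef : CV_radius J0_coef = p_infty.
Proof. apply CV_radius_le_inv_fact, J0_coef_le_inv_fact. Qed.

(* Bessel's equation in the variable z = x^2 / 4. *)
Lemma J0_PSeries_ode z :
  z * PSeries (PS_derive (PS_derive J0_coef)) z + PSeries (PS_derive J0_coef) z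
  + PSeries J0_coef z = 0.
Proof.
  assert (Hr : forall b, CV_radius b = CV_radius J0_coef -> ex_pseries b z).
  { intros b Hb. apply CV_radius_inside. now rewrite Hb, CV_radius_J0_coef. }
  rewrite <- PSeries_incr_1, <- PSeries_plus, <- PSeries_plus.
  - rewrite <- (PSeries_const_0 z). apply PSeries_ext; intros n.
    unfold PS_plus, PS_incr_1, PS_derive, plus; simpl.
    destruct n as [|m].
    + unfold J0_coef, zero; simpl. field.
    + rewrite (J0_coef_S (S m)).
      change (match m with 0%nat => 1 | S _ => INR m + 1 end) with (INR (S m)).
      rewrite (S_INR (S m)). pose proof (lt_0_INR (S m) (Nat.lt_0_succ m)).
      field. lra.
  - apply CV_radius_inside. eapply Rbar_lt_le_trans; [|apply CV_radius_plus].
    now rewrite CV_radius_incr_1, !CV_radius_derive, CV_radius_J0_coef.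
  - apply Hr. reflexivity.
  - apply Hr. now rewrite CV_radius_incr_1, !CV_radius_derive.
  - apply Hr, CV_radius_derive.
Qed.

Definition dJ0 (x : R) : R := x / 2 * PSeries (PS_derive J0_coef) (x ^ 2 / 4).

Definition d2J0 (x : R) : R :=
  1 / 2 * PSeries (PS_derive J0_coef) (x ^ 2 / 4)
  + x / 2 * (x / 2 * PSeries (PS_derive (PS_derive J0_coef)) (x ^ 2 / 4)).

Lemma is_derive_sqr_div_4 x : is_derive (fun x => x ^ 2 / 4) x (x / 2).
Proof. auto_derive; [easy | field]. Qed.

Lemma is_derive_J0 x : is_derive J0 x (dJ0 x).
Proof.
  apply (is_derive_ext (fun x => PSeries J0_coef (x ^ 2 / 4))).
  { intros t. symmetry. apply J0_PSeries. }
  exact (is_derive_comp _ _ x _ _ (is_derive_PSeries_entire _ _ CV_radius_J0_coef)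
           (is_derive_sqr_div_4 x)).
Qed.

Lemma is_derive_dJ0 x : is_derive dJ0 x (d2J0 x).
Proof.
  pose proof (is_derive_comp _ _ x _ _ (is_derive_PSeries_entire _ _
    (eq_trans (CV_radius_derive _) CV_radius_J0_coef))
    (is_derive_sqr_div_4 x)) as H.
  assert (Hx : is_derive (fun x => x / 2) x (1 / 2)) by (auto_derive; [easy | field]).
  exact (is_derive_mult _ _ x _ _ Hx H Rmult_comm).
Qed.

Lemma Bessel_ode_J0 x : x * d2J0 x + dJ0 x + x * J0 x = 0.
Proof.
  rewrite J0_PSeries. unfold d2J0, dJ0.
  rewrite <- (Rmult_0_r x), <- (J0_PSeries_ode (x ^ 2 / 4)). field.
Qed.

Lemma ex_derive_J0 x : ex_derive J0 x.
Proof. eexists. apply is_derive_J0. Qed.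

Lemma ex_derive_dJ0 x : ex_derive dJ0 x.
Proof. eexists. apply is_derive_dJ0. Qed.

Lemma Derive_J0 x : Derive J0 x = dJ0 x.
Proof. apply is_derive_unique, is_derive_J0. Qed.

Lemma Derive_dJ0 x : Derive dJ0 x = d2J0 x.
Proof. apply is_derive_unique, is_derive_dJ0. Qed.

Global Hint Resolve ex_derive_J0 ex_derive_dJ0 : core.

Lemma J0_0 : J0 0 = 1.
Proof.
  rewrite J0_PSeries. replace (0 ^ 2 / 4) with 0 by field.
  rewrite PSeries_0. unfold J0_coef. simpl. field.
Qed.

Lemma dJ0_0 : dJ0 0 = 0.
Proof. unfold dJ0. field. Qed.

Lemma J0_opp x : J0 (- x) = J0 x.
Proof. rewrite !J0_PSeries. f_equal. field. Qed.

Lemma dJ0_opp x : dJ0 (- x) = - dJ0 x.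
Proof. unfold dJ0. replace ((- x) ^ 2 / 4) with (x ^ 2 / 4) by field. field. Qed.

(* For E = J0^2 + J0'^2, Bessel's equation gives x E'(x) = -2 J0'(x)^2: E is even and
   decreases on [0, +oo) from E(0) = 1. *)
Lemma J0_energy_le_1 x : J0 x ^ 2 + dJ0 x ^ 2 <= 1.
Proof.
  set (E := fun x => J0 x ^ 2 + dJ0 x ^ 2).
  change (E x <= 1).
  assert (HE : forall t, is_derive E t (2 * dJ0 t * (J0 t + d2J0 t))).
  { intros t. unfold E. auto_derive; [auto|]. rewrite Derive_J0, Derive_dJ0. ring. }
  assert (Hpos : forall x, 0 <= x -> E x <= 1).
  { intros x' Hx.
    destruct (MVT_gen E 0 x' _ (fun t _ => HE t)) as [c [Hc HMVT]].
    { intros t _. apply ex_derive_continuity_pt. eexists. apply HE. }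
    rewrite Rmin_left, Rmax_right in Hc by lra.
    assert (E0 : E 0 = 1) by (unfold E; rewrite J0_0, dJ0_0; ring).
    pose proof (Bessel_ode_J0 c) as Hode.
    destruct (Req_dec c 0) as [->|Hc0].
    - rewrite dJ0_0, E0 in HMVT. lra.
    - assert (Hdec : c * (2 * dJ0 c * (J0 c + d2J0 c)) = - 2 * dJ0 c ^ 2).
      { replace (- 2 * dJ0 c ^ 2) with (2 * dJ0 c * (- dJ0 c)) by ring.
        rewrite <- (Rplus_0_r (- dJ0 c)), <- Hode. ring. }
      assert (2 * dJ0 c * (J0 c + d2J0 c) <= 0).
      { apply (Rmult_le_reg_l c); [lra|]. rewrite Hdec. nra. }
      nra. }
  destruct (Rle_dec 0 x); [now apply Hpos|].
  replace (E x) with (E (- x)) by (unfold E; rewrite J0_opp, dJ0_opp; ring).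
  apply Hpos. lra.
Qed.

Lemma Rabs_J0_le_1 x : Rabs (J0 x) <= 1.
Proof.
  pose proof (J0_energy_le_1 x). pose proof (pow2_ge_0 (dJ0 x)).
  apply Rabs_le. split; nra.
Qed.

Lemma Rabs_dJ0_le_1 x : Rabs (dJ0 x) <= 1.
Proof.
  pose proof (J0_energy_le_1 x). pose proof (pow2_ge_0 (J0 x)).
  apply Rabs_le. split; nra.
Qed.

(** * Laplace moments of J0 *)

Definition J0_moment (y : R) (n : nat) (B : R) : R :=
  RInt (fun t => exp (- t) * t ^ n * J0 (y * t)) 0 B.

Lemma ex_RInt_J0_moment y n a b :
  ex_RInt (fun t => exp (- t) * t ^ n * J0 (y * t)) a b.
Proof. apply (ex_RInt_continuous (V := R_CompleteNormedModule)). intros. continuous_by_derive. Qed.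

Lemma is_RInt_J0_moment y n B :
  is_RInt (fun t => exp (- t) * t ^ n * J0 (y * t)) 0 B (J0_moment y n B).
Proof. apply (RInt_correct (V := R_CompleteNormedModule)), ex_RInt_J0_moment. Qed.

Definition J0_moment_primitive (y : R) (n : nat) (t : R) : R :=
  exp (- t) * ((INR n * t ^ n - t ^ S n) * J0 (y * t) - t ^ S n * (y * dJ0 (y * t))).

Lemma is_derive_J0_moment_primitive y n t :
  is_derive (J0_moment_primitive y n) t
    (exp (- t) * ((1 + y ^ 2) * t ^ S n - (2 * INR n + 1) * t ^ n
                  + INR n ^ 2 * t ^ pred n) * J0 (y * t)).
Proof.
  unfold J0_moment_primitive. auto_derive; auto.
  change (fun x => J0 x) with J0. change (fun x => dJ0 x) with dJ0.
  rewrite Derive_J0, Derive_dJ0.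
  change (match n with 0%nat => 1 | S _ => INR n + 1 end) with (INR (S n)).
  rewrite S_INR.
  assert (H : exp (- t) * y * t ^ n
    * (y * t * d2J0 (y * t) + dJ0 (y * t) + y * t * J0 (y * t)) = 0)
    by (rewrite Bessel_ode_J0; ring).
  simpl pow. lra.
Qed.

Lemma J0_moment_rec y n B :
  (1 + y ^ 2) * J0_moment y (S n) B - (2 * INR n + 1) * J0_moment y n B
  + INR n ^ 2 * J0_moment y (pred n) B = J0_moment_primitive y n B.
Proof.
  set (df := fun t => exp (- t) * ((1 + y ^ 2) * t ^ S n - (2 * INR n + 1) * t ^ n
                                   + INR n ^ 2 * t ^ pred n) * J0 (y * t)).
  assert (H1 : is_RInt df 0 B
    (minus (J0_moment_primitive y n B) (J0_moment_primitive y n 0))).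
  { apply (is_RInt_derive (V := R_CompleteNormedModule)).
    - intros t _. apply is_derive_J0_moment_primitive.
    - intros t _. unfold df. continuous_by_derive. }
  assert (H2 : is_RInt df 0 B ((1 + y ^ 2) * J0_moment y (S n) B
      - (2 * INR n + 1) * J0_moment y n B + INR n ^ 2 * J0_moment y (pred n) B)).
  { pose proof (is_RInt_scal _ _ _ (1 + y ^ 2) _ (is_RInt_J0_moment y (S n) B)) as A1.
    pose proof (is_RInt_scal _ _ _ (2 * INR n + 1) _ (is_RInt_J0_moment y n B)) as A2.
    pose proof (is_RInt_scal _ _ _ (INR n ^ 2) _ (is_RInt_J0_moment y (pred n) B)) as A3.
    eapply is_RInt_ext; [| exact (is_RInt_plus _ _ _ _ _ _ (is_RInt_minus _ _ _ _ _ _ A1 A2) A3)].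
    intros t _. unfold df, scal, plus, minus, opp, mult; simpl.
    unfold mult, plus, opp; simpl. ring. }
  apply (is_RInt_unique (V := R_CompleteNormedModule)) in H1, H2.
  rewrite <- H2, H1.
  assert (J0_moment_primitive y n 0 = 0)
    by (unfold J0_moment_primitive; destruct n; simpl; ring).
  unfold minus, plus, opp; simpl. lra.
Qed.

Lemma is_lim_J0_moment_primitive y n :
  is_lim (J0_moment_primitive y n) p_infty 0.
Proof.
  apply (is_lim_abs_sub_le _ (fun B => INR n * (exp (- B) * B ^ n)
                                     + (1 + Rabs y) * (exp (- B) * B ^ S n))).
  - intros B HB. rewrite Rminus_0_r. unfold J0_moment_primitive.
    pose proof (Rabs_J0_le_1 (y * B)). pose proof (Rabs_dJ0_le_1 (y * B)).
    pose proof (exp_pos (- B)). pose proof (pow_le B n HB). pose proof (pow_le B (S n) HB).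
    pose proof (pos_INR n). pose proof (Rabs_pos y).
    replace ((INR n * B ^ n - B ^ S n) * J0 (y * B) - B ^ S n * (y * dJ0 (y * B)))
      with (INR n * B ^ n * J0 (y * B) - B ^ S n * (J0 (y * B) + y * dJ0 (y * B)))
      by ring.
    rewrite Rabs_mult, (Rabs_pos_eq (exp _)) by lra.
    assert (HJ : Rabs (J0 (y * B) + y * dJ0 (y * B)) <= 1 + Rabs y).
    { eapply Rle_trans; [apply Rabs_triang|]. rewrite Rabs_mult.
      pose proof (Rmult_le_compat_l _ _ _ (Rabs_pos y) H0). lra. }
    assert (Rabs (INR n * B ^ n * J0 (y * B) - B ^ S n * (J0 (y * B) + y * dJ0 (y * B)))
            <= INR n * B ^ n + B ^ S n * (1 + Rabs y)).
    { unfold Rminus. eapply Rle_trans; [apply Rabs_triang|].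
      rewrite Rabs_Ropp, !Rabs_mult, (Rabs_pos_eq (INR n)), (Rabs_pos_eq (B ^ n)),
        (Rabs_pos_eq (B ^ S n)) by lra.
      apply Rplus_le_compat.
      - rewrite <- (Rmult_1_r (INR n * B ^ n)) at 2.
        apply Rmult_le_compat_l; [nra | lra].
      - apply Rmult_le_compat_l; lra. }
    nra.
  - replace (Finite 0) with (Finite (INR n * 0 + (1 + Rabs y) * 0)) by (f_equal; ring).
    apply is_lim_plus'; exact (is_lim_scal_l _ _ _ _ (is_lim_exp_opp_mul_pow _)).
Qed.

Lemma is_derive_J0_moment_0_param y B :
  is_derive (fun u => J0_moment u 0 B) y
    (RInt (fun t => exp (- t) * (t * dJ0 (y * t))) 0 B).
Proof.
  assert (Hd : forall u t,
    Derive (fun u => exp (- t) * t ^ 0 * J0 (u * t)) u = exp (- t) * (t * dJ0 (u * t))).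
  { intros u t. apply is_derive_unique. auto_derive; auto. rewrite Derive_J0. ring. }
  rewrite <- (RInt_ext (fun t => Derive (fun u => exp (- t) * t ^ 0 * J0 (u * t)) y))
    by (intros; apply Hd).
  apply is_derive_RInt_param.
  - apply filter_forall. intros u t _. auto_derive; auto.
  - intros t _.
    apply (continuity_2d_pt_ext (fun u v => exp (- v) * (v * dJ0 (u * v)))).
    { intros u v. symmetry. apply Hd. }
    apply continuity_2d_pt_mult.
    + apply (continuity_1d_2d_pt_comp exp (fun u v => - v)).
      * apply ex_derive_continuity_pt. auto_derive; auto.
      * apply continuity_2d_pt_opp, continuity_2d_pt_id2.
    + apply continuity_2d_pt_mult; [apply continuity_2d_pt_id2|].
      apply (continuity_1d_2d_pt_comp dJ0 (fun u v => u * v)).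
      * apply ex_derive_continuity_pt. auto.
      * apply continuity_2d_pt_mult; [apply continuity_2d_pt_id1 | apply continuity_2d_pt_id2].
  - apply filter_forall. intros u. apply ex_RInt_J0_moment.
Qed.

Lemma J0_moment_0_param_eq y B :
  (1 + y ^ 2) * RInt (fun t => exp (- t) * (t * dJ0 (y * t))) 0 B + y * J0_moment y 0 B
  = exp (- B) * (y * B * J0 (y * B) - B * dJ0 (y * B)).
Proof.
  set (Psi := fun t => exp (- t) * (y * t * J0 (y * t) - t * dJ0 (y * t))).
  set (df := fun t => exp (- t) * ((1 + y ^ 2) * (t * dJ0 (y * t)) + y * J0 (y * t))).
  assert (H1 : is_RInt df 0 B (minus (Psi B) (Psi 0))).
  { apply (is_RInt_derive (V := R_CompleteNormedModule)).
    - intros t _. unfold Psi, df. auto_derive; auto.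
      change (fun x => J0 x) with J0. change (fun x => dJ0 x) with dJ0.
      rewrite Derive_J0, Derive_dJ0.
      assert (H : exp (- t) * (y * t * d2J0 (y * t) + dJ0 (y * t) + y * t * J0 (y * t)) = 0)
        by (rewrite Bessel_ode_J0; ring).
      lra.
    - intros t _. unfold df. continuous_by_derive. }
  assert (Ex : ex_RInt (fun t => exp (- t) * (t * dJ0 (y * t))) 0 B).
  { apply (ex_RInt_continuous (V := R_CompleteNormedModule)). intros. continuous_by_derive. }
  assert (H2 : is_RInt df 0 B ((1 + y ^ 2) * RInt (fun t => exp (- t) * (t * dJ0 (y * t))) 0 B
                               + y * J0_moment y 0 B)).
  { pose proof (is_RInt_scal _ _ _ (1 + y ^ 2) _ (RInt_correct _ _ _ Ex)) as A1.
    pose proof (is_RInt_scal _ _ _ y _ (is_RInt_J0_moment y 0 B)) as A2.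
    eapply is_RInt_ext; [| exact (is_RInt_plus _ _ _ _ _ _ A1 A2)].
    intros t _. unfold df, scal, plus, mult; simpl. unfold mult, plus; simpl. ring. }
  apply (is_RInt_unique (V := R_CompleteNormedModule)) in H1, H2.
  rewrite <- H2, H1. unfold Psi, minus, plus, opp; simpl. ring.
Qed.

Lemma J0_moment_0_0 B : J0_moment 0 0 B = 1 - exp (- B).
Proof.
  unfold J0_moment. rewrite (RInt_ext _ (fun t => exp (- t)))
    by (intros; rewrite Rmult_0_l, J0_0; simpl; now rewrite !Rmult_1_r).
  apply (is_RInt_unique (V := R_CompleteNormedModule)).
  replace (1 - exp (- B)) with (minus (- exp (- B)) (- exp (- 0)))
    by (unfold minus, plus, opp; simpl; rewrite Ropp_0, exp_0; ring).
  apply (is_RInt_derive (V := R_CompleteNormedModule) (fun t => - exp (- t))).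
  - intros. auto_derive; auto. ring.
  - intros. continuous_by_derive.
Qed.

(* By J0_moment_0_param_eq, G(s) = sqrt (1 + s^2) J0_moment s 0 B has derivative
   O(B exp (- B)) uniformly in s, and G(0) = 1 - exp (- B). *)
Lemma sqrt_mul_J0_moment_0_approx y B : 0 <= B ->
  Rabs (sqrt (1 + y ^ 2) * J0_moment y 0 B - (1 - exp (- B)))
  <= exp (- B) * B * (Rabs y + 1) * Rabs y.
Proof.
  intros HB.
  assert (Hc : forall s, 0 < 1 + s ^ 2) by (intros s; pose proof (pow2_ge_0 s); lra).
  set (Psi := fun s => exp (- B) * (s * B * J0 (s * B) - B * dJ0 (s * B))).
  assert (HG : forall s, is_derive (fun s => sqrt (1 + s ^ 2) * J0_moment s 0 B) s
                                   (Psi s / sqrt (1 + s ^ 2))).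
  { intros s. pose proof (sqrt_lt_R0 _ (Hc s)) as Hs.
    pose proof (sqrt_sqrt (1 + s ^ 2) (Rlt_le _ _ (Hc s))) as Hss.
    assert (HS : is_derive (fun s => sqrt (1 + s ^ 2)) s (s / sqrt (1 + s ^ 2))).
    { auto_derive; [apply Hc |]. replace (s * (s * 1)) with (s ^ 2) by ring. field. lra. }
    pose proof (is_derive_mult _ _ s _ _ HS (is_derive_J0_moment_0_param s B) Rmult_comm)
      as HM.
    match type of HM with is_derive _ _ ?l => replace (Psi s / sqrt (1 + s ^ 2)) with l end;
      [exact HM|].
    unfold Psi. rewrite <- (J0_moment_0_param_eq s B).
    unfold plus, mult; simpl. replace (s * (s * 1)) with (s ^ 2) by ring.
    set (q := sqrt (1 + s ^ 2)) in *. rewrite <- Hss. field. lra. }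
  destruct (MVT_gen _ 0 y _ (fun s _ => HG s)) as [xi [Hxi HMVT]].
  { intros s _. apply ex_derive_continuity_pt. eexists. apply HG. }
  rewrite J0_moment_0_0, pow_i, Rplus_0_r, sqrt_1, Rmult_1_l in HMVT by lia.
  rewrite HMVT, Rminus_0_r, Rabs_mult.
  apply Rmult_le_compat_r; [apply Rabs_pos|].
  assert (Hxy : Rabs xi <= Rabs y).
  { destruct (Rle_dec 0 y).
    - rewrite Rmin_left, Rmax_right in Hxi by lra. rewrite !Rabs_pos_eq by lra. lra.
    - rewrite Rmin_right, Rmax_left in Hxi by lra. rewrite !Rabs_left1 by lra. lra. }
  assert (Hq : 1 <= sqrt (1 + xi ^ 2)).
  { rewrite <- sqrt_1 at 1. apply sqrt_le_1_alt. pose proof (pow2_ge_0 xi). lra. }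
  assert (HPsi : Rabs (Psi xi) <= exp (- B) * B * (Rabs y + 1)).
  { unfold Psi. pose proof (exp_pos (- B)).
    replace (xi * B * J0 (xi * B) - B * dJ0 (xi * B))
      with (B * (xi * J0 (xi * B) - dJ0 (xi * B))) by ring.
    rewrite !Rabs_mult, (Rabs_pos_eq (exp _)), (Rabs_pos_eq B), Rmult_assoc by lra.
    apply Rmult_le_compat_l; [lra|]. apply Rmult_le_compat_l; [lra|].
    unfold Rminus. eapply Rle_trans; [apply Rabs_triang|].
    rewrite Rabs_Ropp, Rabs_mult.
    pose proof (Rabs_J0_le_1 (xi * B)). pose proof (Rabs_dJ0_le_1 (xi * B)).
    pose proof (Rmult_le_compat_l _ _ _ (Rabs_pos xi) H0). lra. }
  unfold Rdiv. rewrite Rabs_mult, Rabs_inv, (Rabs_pos_eq (sqrt _)) by lra.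
  apply Rle_trans with (Rabs (Psi xi) * 1); [|lra].
  apply Rmult_le_compat_l; [apply Rabs_pos|].
  apply Rle_trans with (/ 1); [apply Rinv_le_contravar |]; lra.
Qed.

Lemma is_lim_J0_moment_0 y : is_lim (J0_moment y 0) p_infty (/ sqrt (1 + y ^ 2)).
Proof.
  assert (Hs : 0 < sqrt (1 + y ^ 2)) by (apply sqrt_lt_R0; pose proof (pow2_ge_0 y); lra).
  apply (is_lim_abs_sub_le _ (fun B => / sqrt (1 + y ^ 2)
           * (exp (- B) * B ^ 0 + (Rabs y + 1) * Rabs y * (exp (- B) * B ^ 1)))).
  - intros B HB. pose proof (sqrt_mul_J0_moment_0_approx y B HB) as H.
    replace (J0_moment y 0 B - / sqrt (1 + y ^ 2)) with (/ sqrt (1 + y ^ 2)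
      * ((sqrt (1 + y ^ 2) * J0_moment y 0 B - (1 - exp (- B))) - exp (- B)))
      by (field; lra).
    rewrite Rabs_mult, (Rabs_pos_eq (/ _)) by (apply Rlt_le, Rinv_0_lt_compat; lra).
    apply Rmult_le_compat_l; [apply Rlt_le, Rinv_0_lt_compat; lra|].
    unfold Rminus at 1. eapply Rle_trans; [apply Rabs_triang|].
    rewrite Rabs_Ropp, (Rabs_pos_eq (exp _)) by (apply Rlt_le, exp_pos).
    rewrite pow_O, pow_1. lra.
  - replace (Finite 0) with (Finite (/ sqrt (1 + y ^ 2) * (0 + (Rabs y + 1) * Rabs y * 0)))
      by (f_equal; ring).
    apply (is_lim_scal_l _ _ _ (Finite (0 + (Rabs y + 1) * Rabs y * 0))), is_lim_plus';
      [|exact (is_lim_scal_l _ _ _ _ (is_lim_exp_opp_mul_pow _))];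
      apply is_lim_exp_opp_mul_pow.
Qed.

(** * The limits of the moments *)

Definition inv_fact_sub (m k : nat) : R :=
  if Nat.leb k m then / INR (fact (m - k)) else 0.

Lemma inv_fact_sub_add k p : inv_fact_sub (k + p) k = / INR (fact p).
Proof.
  unfold inv_fact_sub. rewrite (proj2 (Nat.leb_le k (k + p))) by lia.
  do 3 f_equal. lia.
Qed.

Lemma inv_fact_sub_lt m k : (m < k)%nat -> inv_fact_sub m k = 0.
Proof. intros H. unfold inv_fact_sub. now rewrite (proj2 (Nat.leb_gt k m)). Qed.

Lemma inv_fact_sub_rec n k :
  (INR (S (S n)) ^ 2 - INR k ^ 2) * inv_fact_sub (S (S n)) k
  - (2 * INR n + 3) * inv_fact_sub (S n) k + inv_fact_sub n k = 0.
Proof.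
  destruct (le_lt_dec k n) as [H|H].
  - destruct (Nat.le_exists_sub k n H) as [p [-> _]].
    replace (S (S (p + k))) with (k + S (S p))%nat by lia.
    replace (S (p + k)) with (k + S p)%nat by lia.
    rewrite (Nat.add_comm p k), !inv_fact_sub_add, !fact_simpl, !mult_INR.
    pose proof (INR_fact_lt_0 p). pose proof (pos_INR p). pose proof (pos_INR k).
    rewrite !plus_INR, !S_INR. field. lra.
  - rewrite (inv_fact_sub_lt n) by lia.
    destruct (Nat.eq_dec k (S n)) as [->|Hk].
    + assert (E1 : inv_fact_sub (S n + 1) (S n) = 1)
        by (rewrite inv_fact_sub_add; simpl; field).
      assert (E0 : inv_fact_sub (S n + 0) (S n) = 1)
        by (rewrite inv_fact_sub_add; simpl; field).
      rewrite Nat.add_1_r in E1. rewrite Nat.add_0_r in E0.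
      rewrite E1, E0, !S_INR. ring.
    + rewrite (inv_fact_sub_lt (S n)) by lia.
      destruct (Nat.eq_dec k (S (S n))) as [->|Hk'].
      * ring.
      * rewrite inv_fact_sub_lt by lia. ring.
Qed.

Definition J0_term (y : R) (j : nat) : R :=
  (-1) ^ j * y ^ (2 * j) / (4 ^ j * INR (fact j) ^ 2).

Lemma J0_term_S y j : y ^ 2 * J0_term y j = - INR (2 * S j) ^ 2 * J0_term y (S j).
Proof.
  unfold J0_term. rewrite fact_simpl, mult_INR.
  replace (2 * S j)%nat with (S (S (2 * j))) by lia.
  rewrite mult_INR. simpl (INR 2).
  pose proof (INR_fact_lt_0 j). pose proof (lt_0_INR (S j) (Nat.lt_0_succ j)).
  assert (0 < 4 ^ j) by (apply pow_lt; lra).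
  set (u := INR (S j)) in *. set (f := INR (fact j)) in *. simpl pow.
  field. repeat split; lra.
Qed.

Definition moment_sum_term (y : R) (n j : nat) : R := J0_term y j * inv_fact_sub n (2 * j).

Definition moment_sum (y : R) (n : nat) : R := sum_f_R0 (moment_sum_term y n) n.

Lemma moment_sum_term_rec y n j :
  INR (S (S n)) ^ 2 * moment_sum_term y (S (S n)) j
  - (2 * INR n + 3) * moment_sum_term y (S n) j + moment_sum_term y n j
  + y ^ 2 * (match j with 0%nat => 0 | S i => moment_sum_term y n i end) = 0.
Proof.
  unfold moment_sum_term. pose proof (inv_fact_sub_rec n (2 * j)) as H.
  destruct j as [|i].
  - match type of H with ?X = 0 => transitivity (J0_term y 0 * X) end;
      [simpl (INR (2 * 0)); ring | rewrite H; ring].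
  - rewrite <- (Rmult_assoc (y ^ 2)), J0_term_S.
    change (inv_fact_sub n (2 * i)) with (inv_fact_sub (S (S n)) (S (S (2 * i)))).
    replace (S (S (2 * i))) with (2 * S i)%nat by lia.
    match type of H with ?X = 0 => transitivity (J0_term y (S i) * X) end;
      [ring | rewrite H; ring].
Qed.

Lemma moment_sum_term_vanish y n j : (n < 2 * j)%nat -> moment_sum_term y n j = 0.
Proof. intros H. unfold moment_sum_term. rewrite inv_fact_sub_lt by exact H. ring. Qed.

Lemma moment_sum_extend y n N :
  (n <= N)%nat -> sum_f_R0 (moment_sum_term y n) N = moment_sum y n.
Proof.
  intros HN. apply sum_f_R0_eq_of_vanish; [exact HN|].
  intros j Hj. apply moment_sum_term_vanish. lia.
Qed.

Lemma moment_sum_rec y n :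
  INR (S (S n)) ^ 2 * moment_sum y (S (S n))
  = (2 * INR n + 3) * moment_sum y (S n) - (1 + y ^ 2) * moment_sum y n.
Proof.
  pose proof (sum_eq_R0 _ (S (S n)) (fun j _ => moment_sum_term_rec y n j)) as H.
  rewrite plus_sum, plus_sum, minus_sum, !sum_f_R0_mult_l in H.
  rewrite (decomp_sum (fun j => match j with 0%nat => 0 | S i => moment_sum_term y n i end))
    in H by lia.
  simpl pred in H.
  rewrite !moment_sum_extend in H by lia. lra.
Qed.

Lemma moment_sum_0 y : moment_sum y 0 = 1.
Proof. unfold moment_sum, moment_sum_term, J0_term, inv_fact_sub. simpl. field. Qed.

Lemma moment_sum_1 y : moment_sum y 1 = 1.
Proof. unfold moment_sum, moment_sum_term, J0_term, inv_fact_sub. simpl. field. Qed.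

(* This is n! (1 + y^2)^(-(n+1)/2) P_n((1 + y^2)^(-1/2)), P_n the Legendre
   polynomial; written with moment_sum it makes the final series a Cauchy product. *)
Definition J0_moment_limit (y : R) (n : nat) : R :=
  INR (fact n) ^ 2 / ((1 + y ^ 2) ^ n * sqrt (1 + y ^ 2)) * moment_sum y n.

Lemma J0_moment_limit_rec y n :
  (1 + y ^ 2) * J0_moment_limit y (S (S n))
  = (2 * INR (S n) + 1) * J0_moment_limit y (S n) - INR (S n) ^ 2 * J0_moment_limit y n.
Proof.
  assert (Hc : 0 < 1 + y ^ 2) by (pose proof (pow2_ge_0 y); lra).
  pose proof (sqrt_lt_R0 _ Hc).
  assert (E : moment_sum y (S (S n)) = ((2 * INR n + 3) * moment_sum y (S n)
              - (1 + y ^ 2) * moment_sum y n) / INR (S (S n)) ^ 2).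
  { rewrite <- moment_sum_rec. field. apply not_0_INR. lia. }
  unfold J0_moment_limit. rewrite E, !fact_simpl, !mult_INR.
  pose proof (INR_fact_lt_0 n). assert (0 < (1 + y ^ 2) ^ n) by (apply pow_lt; lra).
  rewrite !S_INR. pose proof (pos_INR n).
  set (c := 1 + y ^ 2) in *. set (s := sqrt c) in *. simpl pow. field. repeat split; lra.
Qed.

Lemma is_lim_J0_moment_S y n (l l' : R) :
  is_lim (J0_moment y n) p_infty l -> is_lim (J0_moment y (pred n)) p_infty l' ->
  is_lim (J0_moment y (S n)) p_infty (/ (1 + y ^ 2) * ((2 * INR n + 1) * l - INR n ^ 2 * l')).
Proof.
  intros Hl Hl'.
  assert (Hc : 0 < 1 + y ^ 2) by (pose proof (pow2_ge_0 y); lra).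
  apply (is_lim_ext (fun B => / (1 + y ^ 2) * (J0_moment_primitive y n B
           + ((2 * INR n + 1) * J0_moment y n B - INR n ^ 2 * J0_moment y (pred n) B)))).
  { intros B. rewrite <- (J0_moment_rec y n B). field. lra. }
  replace (Finite (/ (1 + y ^ 2) * ((2 * INR n + 1) * l - INR n ^ 2 * l')))
    with (Rbar_mult (/ (1 + y ^ 2)) (0 + ((2 * INR n + 1) * l - INR n ^ 2 * l')))
    by (simpl; f_equal; ring).
  apply is_lim_scal_l, is_lim_plus'; [apply is_lim_J0_moment_primitive|].
  apply is_lim_minus'; [exact (is_lim_scal_l _ _ _ _ Hl) | exact (is_lim_scal_l _ _ _ _ Hl')].
Qed.

Lemma is_lim_J0_moment y n : is_lim (J0_moment y n) p_infty (J0_moment_limit y n).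
Proof.
  assert (Hc : 0 < 1 + y ^ 2) by (pose proof (pow2_ge_0 y); lra).
  pose proof (sqrt_lt_R0 _ Hc).
  assert (H0 : is_lim (J0_moment y 0) p_infty (J0_moment_limit y 0)).
  { replace (J0_moment_limit y 0) with (/ sqrt (1 + y ^ 2))
      by (unfold J0_moment_limit; rewrite moment_sum_0, pow_O;
          change (INR (fact 0)) with 1; field; lra).
    apply is_lim_J0_moment_0. }
  enough (Hpair : is_lim (J0_moment y n) p_infty (J0_moment_limit y n)
                  /\ is_lim (J0_moment y (S n)) p_infty (J0_moment_limit y (S n)))
    by apply Hpair.
  induction n as [|n [IH IHS]].
  - split; [exact H0|].
    replace (J0_moment_limit y 1)
      with (/ (1 + y ^ 2) * ((2 * INR 0 + 1) * J0_moment_limit y 0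
                             - INR 0 ^ 2 * J0_moment_limit y 0))
      by (unfold J0_moment_limit; rewrite moment_sum_0, moment_sum_1, pow_O, pow_1;
          change (INR (fact 0)) with 1; change (INR (fact 1)) with 1;
          change (INR 0) with 0; field; lra).
    now apply is_lim_J0_moment_S.
  - split; [exact IHS|].
    replace (J0_moment_limit y (S (S n)))
      with (/ (1 + y ^ 2) * ((2 * INR (S n) + 1) * J0_moment_limit y (S n)
                             - INR (S n) ^ 2 * J0_moment_limit y n))
      by (rewrite <- J0_moment_limit_rec; field; lra).
    now apply is_lim_J0_moment_S.
Qed.

(** * The ber series and its truncation *)

Definition ber_coef (k : nat) : R := (-1) ^ k / INR (fact (2 * k)) ^ 2.

Lemma ber_PSeries a c t :
  0 <= c * t -> ber (a * sqrt (c * t)) = PSeries ber_coef ((a ^ 2 * c / 4 * t) ^ 2).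
Proof.
  intros H. unfold ber, PSeries. apply Series_ext. intros k.
  rewrite (pow_mult _ 4 k).
  replace ((a * sqrt (c * t) / 2) ^ 4) with ((a ^ 2 * c / 4 * t) ^ 2).
  - unfold ber_coef. pose proof (INR_fact_lt_0 (2 * k)). field. lra.
  - replace ((a * sqrt (c * t) / 2) ^ 4) with (a ^ 4 * (sqrt (c * t) ^ 2) ^ 2 / 16) by field.
    rewrite pow2_sqrt by lra. field.
Qed.

Lemma ber_coef_le_inv_fact k : Rabs (ber_coef k) <= / INR (fact k).
Proof.
  unfold ber_coef, Rdiv. rewrite Rabs_mult, pow_1_abs, Rmult_1_l.
  pose proof (INR_fact_ge_1 k). pose proof (le_INR _ _ (fact_le k (2 * k) ltac:(lia))).
  rewrite Rabs_pos_eq by (apply Rlt_le, Rinv_0_lt_compat, pow_lt; lra).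
  apply Rinv_le_contravar; [lra | rewrite <- Rsqr_pow2; unfold Rsqr; nra].
Qed.

Definition cosh_coef (k : nat) : R := / INR (fact (2 * k)).

Lemma ex_series_cosh_coef q : ex_series (fun k => cosh_coef k * q ^ k).
Proof.
  apply ex_series_Rabs, CV_disk_inside, Rabs_lt_CV_radius_le_inv_fact. intros k.
  unfold cosh_coef. pose proof (INR_fact_ge_1 k).
  pose proof (le_INR _ _ (fact_le k (2 * k) ltac:(lia))).
  rewrite Rabs_pos_eq by (apply Rlt_le, Rinv_0_lt_compat; lra).
  apply Rinv_le_contravar; lra.
Qed.

(* Split (2k)! twice: one factor absorbs (t/2)^(2k) into exp (t/2), the other is
   the k-th coefficient of cosh (2 kappa). *)
Lemma Rabs_ber_term_le k kappa t : 0 <= t ->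
  Rabs (ber_coef k * ((kappa * t) ^ 2) ^ k)
  <= exp (t / 2) * (cosh_coef k * (4 * kappa ^ 2) ^ k).
Proof.
  intros Ht.
  pose proof (pow_div_fact_le_exp (t / 2) (2 * k) ltac:(lra)) as H.
  pose proof (INR_fact_lt_0 (2 * k)).
  unfold ber_coef, cosh_coef. rewrite Rabs_mult.
  unfold Rdiv at 1. rewrite Rabs_mult, pow_1_abs, Rmult_1_l.
  rewrite Rabs_pos_eq by (apply Rlt_le, Rinv_0_lt_compat, pow_lt; lra).
  rewrite Rabs_pos_eq by (apply pow_le, pow2_ge_0).
  rewrite <- !pow_mult.
  replace ((kappa * t) ^ (2 * k)) with ((2 * kappa) ^ (2 * k) * (t / 2) ^ (2 * k))
    by (rewrite <- Rpow_mult_distr; f_equal; field).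
  replace ((4 * kappa ^ 2) ^ k) with ((2 * kappa) ^ (2 * k))
    by (rewrite pow_mult; f_equal; ring).
  assert (0 <= (2 * kappa) ^ (2 * k) / INR (fact (2 * k)))
    by (apply Rle_mult_inv_pos; [rewrite pow_mult; apply pow_le, pow2_ge_0 | lra]).
  assert (0 <= (t / 2) ^ (2 * k) / INR (fact (2 * k)))
    by (apply Rle_mult_inv_pos; [apply pow_le | ]; lra).
  replace (/ INR (fact (2 * k)) ^ 2 * ((2 * kappa) ^ (2 * k) * (t / 2) ^ (2 * k)))
    with ((2 * kappa) ^ (2 * k) / INR (fact (2 * k))
          * ((t / 2) ^ (2 * k) / INR (fact (2 * k)))) by (field; lra).
  replace (exp (t / 2) * (/ INR (fact (2 * k)) * (2 * kappa) ^ (2 * k)))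
    with ((2 * kappa) ^ (2 * k) / INR (fact (2 * k)) * exp (t / 2)) by (field; lra).
  apply Rmult_le_compat_l; lra.
Qed.

Definition cosh_tail (q : R) (K : nat) : R :=
  Series (fun k => cosh_coef (S K + k) * q ^ (S K + k)).

Lemma ber_PSeries_trunc_le kappa t K : 0 <= t ->
  Rabs (PSeries ber_coef ((kappa * t) ^ 2)
        - sum_f_R0 (fun k => ber_coef k * ((kappa * t) ^ 2) ^ k) K)
  <= exp (t / 2) * cosh_tail (4 * kappa ^ 2) K.
Proof.
  intros Ht.
  set (z := (kappa * t) ^ 2). set (q := 4 * kappa ^ 2).
  set (b := fun k => ber_coef (S K + k) * z ^ (S K + k)).
  set (c := fun k => exp (t / 2) * (cosh_coef (S K + k) * q ^ (S K + k))).
  assert (Hbc : forall k, Rabs (b k) <= c k) by (intros; apply Rabs_ber_term_le, Ht).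
  assert (Hc : ex_series c).
  { apply (ex_series_scal_l (exp (t / 2)) (fun k => cosh_coef (S K + k) * q ^ (S K + k))).
    apply (ex_series_incr_n (fun k => cosh_coef k * q ^ k)), ex_series_cosh_coef. }
  assert (Hb : ex_series (fun k => Rabs (b k))).
  { apply (ex_series_le (K := R_AbsRing) (V := R_CompleteNormedModule)) with c; [|exact Hc].
    intros k. change (Rabs (Rabs (b k)) <= c k). now rewrite Rabs_Rabsolu. }
  unfold PSeries. rewrite (Series_incr_n _ (S K)) by (auto with arith ||
    (apply ex_series_Rabs, CV_disk_inside, Rabs_lt_CV_radius_le_inv_fact,
     ber_coef_le_inv_fact)).
  simpl pred. fold b. replace (_ + Series b - _) with (Series b) by ring.
  eapply Rle_trans; [apply Series_Rabs, Hb|].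
  unfold cosh_tail. rewrite <- Series_scal_l. fold q. fold c.
  apply Series_le; [|exact Hc]. intros k. split; [apply Rabs_pos | apply Hbc].
Qed.

(** * The value as a Cauchy product *)

Definition I0_term (x : R) (j : nat) : R := (x / 2) ^ (2 * j) / INR (fact j) ^ 2.

Definition cos_term (b : R) (m : nat) : R := cos_n m * (b ^ 2) ^ m.

Lemma ex_series_Rabs_I0_term x : ex_series (fun j => Rabs (I0_term x j)).
Proof.
  set (c := fun j => / INR (fact j) ^ 2).
  assert (Hc : forall j, Rabs (c j) <= / INR (fact j)).
  { intros j. unfold c. pose proof (INR_fact_ge_1 j).
    rewrite Rabs_pos_eq by (apply Rlt_le, Rinv_0_lt_compat, pow_lt; lra).
    apply Rinv_le_contravar; [lra | simpl; nra]. }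
  eapply ex_series_ext;
    [| exact (CV_disk_inside c _ (Rabs_lt_CV_radius_le_inv_fact c ((x / 2) ^ 2) Hc))].
  intros j. unfold c, I0_term. rewrite pow_mult. f_equal. unfold Rdiv. ring.
Qed.

Lemma is_series_I0_term x : is_series (I0_term x) (I0 x).
Proof. apply Series_correct, ex_series_Rabs, ex_series_Rabs_I0_term. Qed.

Lemma ex_series_Rabs_cos_term b : ex_series (fun m => Rabs (cos_term b m)).
Proof.
  apply CV_disk_inside, Rabs_lt_CV_radius_le_inv_fact. intros i.
  unfold cos_n, Rdiv. rewrite Rabs_mult, pow_1_abs, Rmult_1_l.
  pose proof (INR_fact_ge_1 i). pose proof (le_INR _ _ (fact_le i (2 * i) ltac:(lia))).
  rewrite Rabs_pos_eq by (apply Rlt_le, Rinv_0_lt_compat; lra).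
  apply Rinv_le_contravar; lra.
Qed.

Lemma is_series_cos_term b : is_series (cos_term b) (cos b).
Proof.
  unfold cos. destruct (exist_cos (Rsqr b)) as [l Hl].
  apply is_series_Reals. unfold cos_term. rewrite <- Rsqr_pow2. exact Hl.
Qed.

Lemma J0_term_mul_ber_sign b y j m :
  (-1) ^ (j + m) * b ^ (2 * (j + m)) * J0_term y j / INR (fact (2 * m))
  = I0_term (b * y) j * cos_term b m.
Proof.
  unfold J0_term, I0_term, cos_term, cos_n.
  pose proof (INR_fact_lt_0 j). pose proof (INR_fact_lt_0 (2 * m)).
  assert (0 < 4 ^ j) by (apply pow_lt; lra).
  assert (Hsign : (-1) ^ j * (-1) ^ j = 1)
    by (rewrite <- Rpow_mult_distr; replace (-1 * -1) with 1 by ring; apply pow1).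
  rewrite (pow_add (-1)), (pow_mult b 2 (j + m)), (pow_add (b ^ 2)), (pow_mult y 2 j),
    (pow_mult (b * y / 2) 2 j).
  replace ((b * y / 2) ^ 2) with (b ^ 2 * (y ^ 2 * / 4)) by field.
  rewrite !Rpow_mult_distr, pow_inv.
  set (s := (-1) ^ j) in *.
  transitivity ((s * s) * ((-1) ^ m * (b ^ 2) ^ j * (b ^ 2) ^ m * (y ^ 2) ^ j
                 / (4 ^ j * INR (fact j) ^ 2) / INR (fact (2 * m)))).
  - field. lra.
  - rewrite Hsign. field. lra.
Qed.

Lemma ber_J0_moment_limit_term a y k :
  ber_coef k * (a ^ 2 * (1 + y ^ 2) / 4) ^ (2 * k) * J0_moment_limit y (2 * k)
  = / sqrt (1 + y ^ 2)
    * sum_f_R0 (fun j => I0_term (a ^ 2 * y / 4) j * cos_term (a ^ 2 / 4) (k - j)) k.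
Proof.
  assert (Hc : 0 < 1 + y ^ 2) by (pose proof (pow2_ge_0 y); lra).
  pose proof (sqrt_lt_R0 _ Hc).
  set (b := a ^ 2 / 4).
  replace (a ^ 2 * (1 + y ^ 2) / 4) with (b * (1 + y ^ 2)) by (unfold b; field).
  replace (a ^ 2 * y / 4) with (b * y) by (unfold b; field).
  unfold J0_moment_limit, ber_coef, moment_sum.
  rewrite (sum_f_R0_eq_of_vanish _ k (2 * k)) by
    (lia || (intros j Hj; apply moment_sum_term_vanish; lia)).
  rewrite Rpow_mult_distr.
  pose proof (INR_fact_lt_0 (2 * k)).
  assert (0 < (1 + y ^ 2) ^ (2 * k)) by (apply pow_lt; lra).
  transitivity (/ sqrt (1 + y ^ 2)
    * sum_f_R0 (fun j => moment_sum_term y (2 * k) j * ((-1) ^ k * b ^ (2 * k))) k).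
  { rewrite <- scal_sum. field. repeat split; lra. }
  f_equal. apply sum_eq. intros j Hj.
  destruct (Nat.le_exists_sub j k Hj) as [m [-> _]].
  rewrite Nat.add_sub, (Nat.add_comm m j), <- J0_term_mul_ber_sign.
  unfold moment_sum_term.
  replace (inv_fact_sub (2 * (j + m)) (2 * j)) with (/ INR (fact (2 * m)))
    by (rewrite <- (inv_fact_sub_add (2 * j) (2 * m)); f_equal; lia).
  unfold Rdiv. ring.
Qed.

Lemma is_series_ber_J0_moment_limit a y :
  is_series (fun k => ber_coef k * (a ^ 2 * (1 + y ^ 2) / 4) ^ (2 * k) * J0_moment_limit y (2 * k))
    (/ sqrt (1 + y ^ 2) * I0 (a ^ 2 * y / 4) * cos (a ^ 2 / 4)).
Proof.
  eapply is_series_ext; [intros k; symmetry; apply ber_J0_moment_limit_term|].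
  rewrite Rmult_assoc.
  exact (is_series_scal_l _ _ _ (is_series_mult _ _ _ _
    (is_series_I0_term _) (is_series_cos_term _)
    (ex_series_Rabs_I0_term _) (ex_series_Rabs_cos_term _))).
Qed.

(** * Termwise integration *)

Lemma ex_derive_PSeries_ber_coef z : ex_derive (PSeries ber_coef) z.
Proof. apply ex_derive_PSeries, Rabs_lt_CV_radius_le_inv_fact, ber_coef_le_inv_fact. Qed.

Global Hint Resolve ex_derive_PSeries_ber_coef : core.

Lemma cosh_tail_nonneg q K : 0 <= q -> 0 <= cosh_tail q K.
Proof.
  intros Hq.
  assert (E : Series (fun _ : nat => 0) = 0).
  { rewrite (Series_ext _ (fun _ => 0 * 0)) by (intros; ring). rewrite Series_scal_l. ring. }
  unfold cosh_tail. rewrite <- E. apply Series_le.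
  - intros k. split; [lra|]. apply Rmult_le_pos; [|now apply pow_le].
    apply Rlt_le, Rinv_0_lt_compat, INR_fact_lt_0.
  - apply (ex_series_incr_n (fun k => cosh_coef k * q ^ k)), ex_series_cosh_coef.
Qed.

Lemma is_RInt_ber_J0_trunc kappa y K B :
  is_RInt (fun t => exp (- t) * sum_f_R0 (fun k => ber_coef k * ((kappa * t) ^ 2) ^ k) K
                    * J0 (y * t)) 0 B
    (sum_f_R0 (fun k => ber_coef k * kappa ^ (2 * k) * J0_moment y (2 * k) B) K).
Proof.
  induction K as [|K IH].
  - pose proof (is_RInt_scal _ _ _ (ber_coef 0 * kappa ^ (2 * 0)) _
      (is_RInt_J0_moment y (2 * 0) B)) as A.
    eapply is_RInt_ext; [| exact A]. intros t _. change (scal ?u ?v) with (u * v).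
    simpl. ring.
  - pose proof (is_RInt_scal _ _ _ (ber_coef (S K) * kappa ^ (2 * S K)) _
      (is_RInt_J0_moment y (2 * S K) B)) as A.
    eapply is_RInt_ext; [| exact (is_RInt_plus _ _ _ _ _ _ IH A)].
    intros t _. change (plus ?u ?v) with (u + v). change (scal ?u ?v) with (u * v).
    rewrite tech5. cbv beta.
    rewrite <- (pow_mult (kappa * t) 2 (S K)), (Rpow_mult_distr kappa t (2 * S K)).
    simpl. ring.
Qed.

Lemma ex_RInt_ber_J0 kappa y a b :
  ex_RInt (fun t => exp (- t) * PSeries ber_coef ((kappa * t) ^ 2) * J0 (y * t)) a b.
Proof.
  apply (ex_RInt_continuous (V := R_CompleteNormedModule)). intros. continuous_by_derive.
Qed.

Lemma Rabs_ber_J0_trunc_le kappa y K t : 0 <= t ->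
  Rabs (exp (- t) * (PSeries ber_coef ((kappa * t) ^ 2)
                     - sum_f_R0 (fun k => ber_coef k * ((kappa * t) ^ 2) ^ k) K) * J0 (y * t))
  <= cosh_tail (4 * kappa ^ 2) K * exp (- t / 2).
Proof.
  intros Ht.
  replace (exp (- t / 2)) with (exp (- t) * exp (t / 2))
    by (rewrite <- exp_plus; f_equal; field).
  rewrite !Rabs_mult, (Rabs_pos_eq (exp _)) by (apply Rlt_le, exp_pos).
  pose proof (ber_PSeries_trunc_le kappa t K Ht) as T.
  pose proof (Rabs_J0_le_1 (y * t)). pose proof (Rabs_pos (J0 (y * t))).
  pose proof (exp_pos (- t)). pose proof (exp_pos (t / 2)).
  rewrite Rmult_assoc, (Rmult_comm (cosh_tail _ _)), (Rmult_assoc (exp (- t))).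
  apply Rmult_le_compat_l; [lra|].
  rewrite <- (Rmult_1_r (_ * cosh_tail _ _)).
  apply Rmult_le_compat; [apply Rabs_pos | apply Rabs_pos | exact T | exact H].
Qed.

Lemma RInt_ber_J0_trunc_le kappa y K B : 0 <= B ->
  Rabs (RInt (fun t => exp (- t) * PSeries ber_coef ((kappa * t) ^ 2) * J0 (y * t)) 0 B
        - sum_f_R0 (fun k => ber_coef k * kappa ^ (2 * k) * J0_moment y (2 * k) B) K)
  <= 2 * cosh_tail (4 * kappa ^ 2) K.
Proof.
  intros HB. set (d := cosh_tail (4 * kappa ^ 2) K).
  assert (Hd : 0 <= d) by (apply cosh_tail_nonneg; pose proof (pow2_ge_0 kappa); lra).
  assert (Hdiff : is_RInt
    (fun t => exp (- t) * (PSeries ber_coef ((kappa * t) ^ 2)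
                           - sum_f_R0 (fun k => ber_coef k * ((kappa * t) ^ 2) ^ k) K)
              * J0 (y * t)) 0 B
    (RInt (fun t => exp (- t) * PSeries ber_coef ((kappa * t) ^ 2) * J0 (y * t)) 0 B
     - sum_f_R0 (fun k => ber_coef k * kappa ^ (2 * k) * J0_moment y (2 * k) B) K)).
  { eapply is_RInt_ext;
      [| exact (is_RInt_minus _ _ _ _ _ _ (RInt_correct _ _ _ (ex_RInt_ber_J0 kappa y 0 B))
                  (is_RInt_ber_J0_trunc kappa y K B))].
    intros t _. unfold minus, plus, opp; simpl. ring. }
  assert (Hexp : is_RInt (fun t => d * exp (- t / 2)) 0 B
                   (minus (- 2 * d * exp (- B / 2)) (- 2 * d * exp (- 0 / 2)))).
  { apply (is_RInt_derive (V := R_CompleteNormedModule) (fun t => - 2 * d * exp (- t / 2))).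
    - intros t _. auto_derive; auto. unfold Rdiv. field.
    - intros. continuous_by_derive. }
  pose proof (fun Hle => norm_RInt_le _ _ 0 B _ _ HB Hle Hdiff Hexp) as N.
  specialize (N (fun t Ht => Rabs_ber_J0_trunc_le kappa y K t (proj1 Ht))).
  change (norm ?u) with (Rabs u) in N. change (minus ?u ?v) with (u - v) in N.
  replace (- 0 / 2) with 0 in N by field. rewrite exp_0 in N.
  pose proof (exp_pos (- B / 2)). nra.
Qed.

Theorem mainTheorem5 (a y : R) :
  is_RInt_gen
    (fun t : R => exp (- t) * ber (a * sqrt ((1 + y ^ 2) * t)) * J0 (y * t))
    (at_point 0) (Rbar_locally p_infty)
    (/ sqrt (1 + y ^ 2) * I0 (a ^ 2 * y / 4) * cos (a ^ 2 / 4)).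
Proof.
  set (kappa := a ^ 2 * (1 + y ^ 2) / 4).
  apply (is_RInt_gen_ext (fun t => exp (- t) * PSeries ber_coef ((kappa * t) ^ 2) * J0 (y * t))).
  { apply (Filter_prod _ _ _ (fun x => x = 0) (fun B => 0 < B)); [reflexivity | now exists 0|].
    intros x B -> HB t Ht. simpl in Ht. rewrite Rmin_left, Rmax_right in Ht by lra.
    rewrite ber_PSeries by (pose proof (pow2_ge_0 y); nra). reflexivity. }
  apply is_RInt_gen_of_is_lim; [intros B _; apply ex_RInt_ber_J0|].
  apply (is_lim_uniform_approx _
    (fun K B => sum_f_R0 (fun k => ber_coef k * kappa ^ (2 * k) * J0_moment y (2 * k) B) K)
    (sum_f_R0 (fun k => ber_coef k * kappa ^ (2 * k) * J0_moment_limit y (2 * k)))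
    (fun K => 2 * cosh_tail (4 * kappa ^ 2) K)).
  - intros K B HB. apply RInt_ber_J0_trunc_le, HB.
  - intros K. apply is_lim_sum_f_R0. intros k.
    exact (is_lim_scal_l _ _ _ _ (is_lim_J0_moment y (2 * k))).
  - eapply is_lim_seq_ext; [intros K; apply sum_n_Reals|].
    apply is_series_ber_J0_moment_limit.
  - replace (Finite 0) with (Rbar_mult 2 0) by (simpl; f_equal; ring).
    apply is_lim_seq_scal_l.
    exact (is_lim_seq_Series_tail (fun k => cosh_coef k * (4 * kappa ^ 2) ^ k)
             (ex_series_cosh_coef _)).
Qed.
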